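(* For positive scores $0<s_1\le\dots\le s_n$ and integer budget $B\ge1$, let $\mathbf h=\mathrm{RAS}(s_1,\dots,s_n;B)$. Then among all optimal allocations $\mathbf a\in\arg\min_{\mathbf a\in\mathcal A}\|\mathbf a\odot\mathbf s\|_\infty$, $\mathbf h$ minimizes the cardinality of the set $\arg\max_{i\in[n]}a_is_i$.
   Context: $\mathcal A=\{\mathbf a\in\mathbb N^n:\|\mathbf a\|_1=B\}$ ($\mathbb N$ includes $0$); $\odot$ is the entrywise product and $\mathbf e_i$ the $i$-th unit vector. RAS$(s_1,\dots,s_n;B)$ with sorted scores $s_1\le\dots\le s_n$: if $B=1$ return $\mathbf e_1$. Otherwise let $\mathbf a=\mathrm{RAS}(s_1,\dots,s_n;B-1)$; let $r=\min\{i:a_i=0\}$ if $a_n=0$, else $r=n$; let $M=\arg\min_{i\in[r]}\|(\mathbf a+\mathbf e_i)\odot\mathbf s\|_\infty$; choose any $j\in M$ minimizing the cardinality of $\arg\max_{i\in[r]}(a_i+e_{j,i})s_i$; return $\mathbf a+\mathbf e_j$. *)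

From HB Require Import structures.
From mathcomp Require Import all_boot all_order all_algebra.
Set Implicit Arguments. Unset Strict Implicit. Unset Printing Implicit Defensive.
Import Order.TTheory GRing.Theory Num.Theory.
Local Open Scope ring_scope.

(* Indices are 0-based: paper index i (1..n) is ordinal i-1 : 'I_n. *)
Section RASDefs.
Variables (R : realFieldType) (n : nat).
Notation alloc := {ffun 'I_n -> nat}.

Definition unitv (j : 'I_n) : alloc := [ffun i => ((i == j) : nat)].
Definition addv (a b : alloc) : alloc := [ffun i => (a i + b i)%N].
Definition l1 (a : alloc) : nat := (\sum_i a i)%N.

Variable s : 'I_n -> R.
Definition ent (a : alloc) (i : 'I_n) : R := (a i)%:R * s i.
Definition linf (a : alloc) : R := \big[Num.max/0]_i `|ent a i|.
Definition maxr (r : nat) (a : alloc) : R :=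
  \big[Num.max/0]_(i : 'I_n | (i < r)%N) `|ent a i|.
Definition argmaxr (r : nat) (a : alloc) : {set 'I_n} :=
  [set i : 'I_n | (i < r)%N && (`|ent a i| == maxr r a)].
Definition argmax (a : alloc) : {set 'I_n} := argmaxr n a.
End RASDefs.

Section RAS.
Variables (R : realFieldType) (n : nat) (s : 'I_n.+1 -> R).
Notation alloc := {ffun 'I_n.+1 -> nat}.

(* r as a count of admissible 0-based indices: paper's r = min{i : a_i = 0}
   (1-based) if a_n = 0, else n; [r] = {i0 : i0 < r}. *)
Definition rcount (a : alloc) : nat :=
  if a ord_max == 0%N then (find (fun i : 'I_n.+1 => a i == 0%N) (enum 'I_n.+1)).+1
  else n.+1.

(* RAS_out B h : h is a possible output of RAS(s;B) (for some resolution
   of the "choose any j" nondeterminism). *)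
Inductive RAS_out : nat -> alloc -> Prop :=
| RAS_base : RAS_out 1 (unitv ord0)
| RAS_step (B : nat) (a : alloc) (j : 'I_n.+1) :
    RAS_out B.+1 a ->
    (j < rcount a)%N ->
    (forall k : 'I_n.+1, (k < rcount a)%N ->
       linf s (addv a (unitv j)) <= linf s (addv a (unitv k))) ->
    (forall k : 'I_n.+1, (k < rcount a)%N ->
       linf s (addv a (unitv k)) = linf s (addv a (unitv j)) ->
       (#|argmaxr s (rcount a) (addv a (unitv j))|
          <= #|argmaxr s (rcount a) (addv a (unitv k))|)%N) ->
    RAS_out B.+2 (addv a (unitv j)).
End RAS.

(* Call an allocation h balanced if raising any single coordinate by one
   already reaches its maximum: ||h (.) s||_oo <= (h_i + 1) s_i for all i.
   A balanced h is optimal among allocations of the same budget: an a with a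
   smaller maximum satisfies a_i s_i < (h_i + 1) s_i, i.e. a <= h
   coordinatewise, hence a = h.  If a is optimal too, with common maximum T,
   then coordinatewise a_i + [i in argmax h] <= h_i + [i in argmax a], and
   summing over i gives B + #argmax h <= B + #argmax a.
   So it suffices that RAS keeps its output balanced: the chosen j minimises
   the new maximum over [r], which bounds it by (a_k + 1) s_k for k in [r],
   and for i beyond [r] the zero coordinate a_r gives the bound s_r <= s_i;
   this is where sortedness of the scores enters. *)
From Pilot Require Import Defs.
From HB Require Import structures.
From mathcomp Require Import all_boot all_order all_algebra.
Import Order.TTheory GRing.Theory Num.Theory.
Local Open Scope ring_scope.
Set Implicit Arguments. Unset Strict Implicit.

Section Scores.
Variables (R : realFieldType) (n : nat) (s : 'I_n -> R).
Hypothesis s_gt0 : forall i, 0 < s i.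
Notation alloc := {ffun 'I_n -> nat}.

Lemma ent_ge0 (a : alloc) i : 0 <= ent s a i.
Proof. by rewrite mulr_ge0 // ltW. Qed.

Lemma ent_le_linf (a : alloc) i : ent s a i <= linf s a.
Proof. by rewrite -[ent s a i]ger0_norm ?ent_ge0 //; apply: le_bigmax. Qed.

Lemma linf_le (a : alloc) (x : R) :
  0 <= x -> (forall i, ent s a i <= x) -> linf s a <= x.
Proof. by move=> x_ge0 le_x; apply: bigmax_le => // i _; rewrite ger0_norm ?ent_ge0. Qed.

Lemma ler_ent (x y : nat) i : (x%:R * s i <= y%:R * s i) = (x <= y)%N.
Proof. by rewrite ler_pM2r // ler_nat. Qed.

Lemma ltr_ent (x y : nat) i : (x%:R * s i < y%:R * s i) = (x < y)%N.
Proof. by rewrite ltr_pM2r // ltr_nat. Qed.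

Lemma score_le_mulSn (m : nat) i : s i <= m.+1%:R * s i.
Proof. by apply: ler_peMl; [exact: ltW | rewrite ler1n]. Qed.

Lemma addv_unitvE (a : alloc) j i : Defs.addv a (unitv j) i = (a i + (i == j))%N.
Proof. by rewrite !ffunE. Qed.

Lemma l1_unitv (j : 'I_n) : l1 (unitv j) = 1%N.
Proof.
rewrite /l1 (bigD1 j) //= ffunE eqxx big1 // => i /negbTE i_neq_j.
by rewrite ffunE i_neq_j.
Qed.

Lemma l1_addv (a b : alloc) : l1 (Defs.addv a b) = (l1 a + l1 b)%N.
Proof. by rewrite /l1 -big_split; apply: eq_bigr => i _; rewrite ffunE. Qed.

Lemma linf_addv_unitv (a : alloc) k :
  linf s (Defs.addv a (unitv k)) <= Num.max (linf s a) ((a k).+1%:R * s k).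
Proof.
apply: linf_le => [|i]; first by rewrite le_max mulr_ge0 ?orbT // ltW.
rewrite /ent addv_unitvE le_max; case: eqVneq => [->|_].
  by rewrite addn1 lexx orbT.
by rewrite addn0 ent_le_linf.
Qed.

Lemma argmaxE (a : alloc) i : (i \in argmax s a) = (ent s a i == linf s a).
Proof.
rewrite inE ltn_ord ger0_norm ?ent_ge0 //.
by congr (_ == _); apply: eq_bigl => k; rewrite ltn_ord.
Qed.

Definition balanced (h : alloc) := forall i, linf s h <= (h i).+1%:R * s i.

Section Balanced.
Variables (h a : alloc).
Hypotheses (h_bal : balanced h) (l1_ah : l1 a = l1 h).

Lemma balanced_linf_min : linf s h <= linf s a.
Proof.
rewrite leNgt; apply/negP => lt_ah.
have le_ah i : (a i <= h i)%N.
  rewrite -ltnS -(ltr_ent _ _ i).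
  exact: le_lt_trans (ent_le_linf a i) (lt_le_trans lt_ah (h_bal i)).
have /eqP eq_sum := l1_ah.
rewrite /l1 (leqif_sum (fun i _ => leqif_eq (le_ah i))).2 in eq_sum.
have a_eq_h : a = h by apply/ffunP => i; apply/eqP; apply: (forallP eq_sum).
by move: lt_ah; rewrite a_eq_h ltxx.
Qed.

Hypothesis linf_ah : linf s a = linf s h.

Lemma balanced_argmax_pointwise i :
  (a i + (i \in argmax s h) <= h i + (i \in argmax s a))%N.
Proof.
rewrite !argmaxE linf_ah.
case: (ltngtP (a i) (h i)) => [lt_ah | gt_ah | eq_ah]; last by rewrite /ent eq_ah.
  apply: leq_trans (leq_addr _ _); apply: leq_trans lt_ah.
  by rewrite -addn1 leq_add2l leq_b1.
have le_ah1 : (a i <= (h i).+1)%N.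
  by rewrite -(ler_ent _ _ i); apply: le_trans (ent_le_linf a i) _; rewrite linf_ah.
have a_eq : a i = (h i).+1 by apply/eqP; rewrite eqn_leq le_ah1.
have ent_a : ent s a i = linf s h.
  by apply/le_anti; rewrite -{1}linf_ah ent_le_linf /ent a_eq h_bal.
have ent_h : ent s h i < linf s h by rewrite -ent_a ltr_ent a_eq.
by rewrite ent_a eqxx (lt_eqF ent_h) addn0 addn1 a_eq.
Qed.

Lemma balanced_argmax_min : (#|argmax s h| <= #|argmax s a|)%N.
Proof.
rewrite -!sum1_card !(big_mkcond (fun i => i \in argmax s _)) /=.
rewrite -(leq_add2l (l1 h)) -{1}l1_ah /l1 -!big_split /=.
by apply: leq_sum => i _; apply: balanced_argmax_pointwise.
Qed.

End Balanced.
End Scores.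

Section RAS.
Variables (R : realFieldType) (n : nat) (s : 'I_n.+1 -> R).
Hypotheses (s_gt0 : forall i, 0 < s i)
  (s_sorted : forall i j : 'I_n.+1, (i <= j)%N -> s i <= s j).
Notation alloc := {ffun 'I_n.+1 -> nat}.

Lemma rcount_zero (a : alloc) :
  (rcount a < n.+1)%N -> exists2 z : 'I_n.+1, z.+1 = rcount a & a z = 0%N.
Proof.
rewrite /rcount; case: eqP => [a_max|]; last by rewrite ltnn.
set z := find _ _ => _.
have has_zero : has (fun i : 'I_n.+1 => a i == 0%N) (enum 'I_n.+1).
  by apply/hasP; exists ord_max; rewrite ?mem_enum ?a_max.
have z_lt : (z < n.+1)%N by rewrite -[X in (_ < X)%N]size_enum_ord -has_find.
exists (Ordinal z_lt) => //; apply/eqP.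
suff -> : Ordinal z_lt = nth ord0 (enum 'I_n.+1) z by exact: (nth_find ord0 has_zero).
by apply: val_inj; rewrite /= nth_enum_ord.
Qed.

Lemma RAS_out_l1 B (h : alloc) : RAS_out s B h -> l1 h = B.
Proof. by elim=> [|{}B a j _ IH *]; rewrite ?l1_unitv // l1_addv IH l1_unitv addn1. Qed.

Lemma balanced_unitv0 : balanced s (unitv ord0).
Proof.
have linf_le_s0 : linf s (unitv ord0) <= s ord0.
  apply: (linf_le s_gt0) => [|k]; first exact/ltW/s_gt0.
  rewrite /ent ffunE; case: eqP => [->|_]; first by rewrite mul1r.
  by rewrite mul0r; apply/ltW/s_gt0.
move=> i; apply: le_trans linf_le_s0 _.
apply: le_trans (@s_sorted ord0 i (leq0n i)) _; exact: score_le_mulSn.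
Qed.

Lemma balanced_RAS_step (a : alloc) (j : 'I_n.+1) :
  balanced s a -> (j < rcount a)%N ->
  (forall k : 'I_n.+1, (k < rcount a)%N ->
     linf s (Defs.addv a (unitv j)) <= linf s (Defs.addv a (unitv k))) ->
  balanced s (Defs.addv a (unitv j)).
Proof.
move=> a_bal j_lt j_min.
have new_max_le (k : 'I_n.+1) : (k < rcount a)%N ->
    linf s (Defs.addv a (unitv j)) <= (a k).+1%:R * s k.
  move=> k_lt; apply: le_trans (j_min k k_lt) _.
  by apply: le_trans (linf_addv_unitv s_gt0 a k) _; rewrite ge_max a_bal lexx.
move=> i; rewrite addv_unitvE; case: eqVneq => [->|_].
  apply: le_trans (new_max_le j j_lt) _.
  by rewrite (ler_ent s_gt0) addn1.
rewrite addn0; case: (ltnP i (rcount a)) => [|ge_i]; first exact: new_max_le.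
have [z z_succ a_z] := rcount_zero (leq_ltn_trans ge_i (ltn_ord i)).
have z_lt_i : (z < i)%N by rewrite z_succ.
apply: le_trans (new_max_le z _) _; first by rewrite -z_succ.
rewrite a_z mul1r; apply: le_trans (s_sorted (ltnW z_lt_i)) _.
exact: score_le_mulSn.
Qed.

Lemma RAS_out_balanced B (h : alloc) : RAS_out s B h -> balanced s h.
Proof.
elim=> [|{}B a j _ a_bal j_lt j_min _]; first exact: balanced_unitv0.
exact: balanced_RAS_step a_bal j_lt j_min.
Qed.

End RAS.

Theorem lemmaC3 (R : realFieldType) (n : nat) (s : 'I_n.+1 -> R)
  (hpos : forall i, 0 < s i)
  (hsorted : forall i j : 'I_n.+1, (i <= j)%N -> s i <= s j)
  (B : nat) (hB : (1 <= B)%N) (h : {ffun 'I_n.+1 -> nat}) :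
  RAS_out s B h ->
  [/\ l1 h = B,
      (forall a : {ffun 'I_n.+1 -> nat}, l1 a = B -> linf s h <= linf s a)
    & (forall a : {ffun 'I_n.+1 -> nat}, l1 a = B ->
         (forall b : {ffun 'I_n.+1 -> nat}, l1 b = B -> linf s a <= linf s b) ->
         (#|argmax s h| <= #|argmax s a|)%N)].
Proof.
move=> h_RAS; have l1_h := RAS_out_l1 h_RAS.
have h_bal := RAS_out_balanced hpos hsorted h_RAS.
have h_opt a : l1 a = B -> linf s h <= linf s a.
  by rewrite -l1_h; apply: balanced_linf_min.
split=> // a l1_a a_opt.
have linf_ah : linf s a = linf s h by apply/le_anti; rewrite a_opt ?h_opt.
by apply: balanced_argmax_min linf_ah; rewrite ?l1_a.
Qed.
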